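(* The tropical Zariski topology on $\mathbb{R}^n$, whose closed sets are the congruence varieties $\boldsymbol{V}(E)$ for congruences $E$ on $\overline{\boldsymbol{T}(X_1,\ldots,X_n)}$, coincides with the Euclidean topology on $\mathbb{R}^n$.
   Context: $\boldsymbol{T}=\mathbb{R}\cup\{-\infty\}$ with $a\oplus b=\max\{a,b\}$, $a\odot b=a+b$. $\overline{\boldsymbol{T}[X_1,\ldots,X_n]}$ is the tropical polynomial semiring modulo identifying polynomials defining the same function $\boldsymbol{T}^n\to\boldsymbol{T}$; it is cancellative and $\overline{\boldsymbol{T}(X_1,\ldots,X_n)}$ is its semifield of fractions. Each element defines a function $\mathbb{R}^n\to\boldsymbol{T}$ (quotients evaluated as differences). A congruence is an equivalence relation compatible with $\oplus$ and $\odot$; $\boldsymbol{V}(E)=\{x\in\mathbb{R}^n\mid f(x)=g(x)\ \forall(f,g)\in E\}$. (These sets are closed under arbitrary intersections and finite unions and include $\varnothing$ and $\mathbb{R}^n$, so they form the closed sets of a topology.) *)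

From HB Require Import structures.
From mathcomp Require Import all_boot all_order all_algebra.
From mathcomp Require Import all_classical all_reals all_analysis.
Set Implicit Arguments. Unset Strict Implicit. Unset Printing Implicit Defensive.
Import Order.TTheory GRing.Theory Num.Theory.
Local Open Scope ring_scope.
Import numFieldNormedType.Exports.
Local Open Scope classical_set_scope.

(* The tropical semifield T = R ∪ {-oo} is modelled by \bar R (the value +oo
   never occurs); ⊕ = maxe, ⊙ = +%E. *)

(* A tropical polynomial in X_1..X_n: a finite list of monomials
   (c, a) meaning c ⊙ X^a, c : R (coefficients -oo are simply omitted),
   a : 'rV[nat]_n an exponent vector. *)
Definition tpoly (R : realType) (n : nat) := seq (R * 'rV[nat]_n).

Definition teval (R : realType) (n : nat) (p : tpoly R n) (x : 'rV[R]_n) : \bar R :=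
  \big[maxe/-oo%E]_(t <- p) (t.1 + \sum_(i < n) (t.2 ord0 i)%:R * x ord0 i)%:E.

(* Elements of the semifield of fractions of the function-quotient of
   T[X_1..X_n], represented by the functions R^n -> T they define:
   h = f ⊘ g (evaluated as f - g), with g a nonzero tropical polynomial. *)
Definition is_trat (R : realType) (n : nat) (h : 'rV[R]_n -> \bar R) : Prop :=
  exists (p q : tpoly R n), q != [::] /\ forall x, h x = (teval p x - teval q x)%E.

Definition tcongruence (R : realType) (n : nat)
    (E : ('rV[R]_n -> \bar R) -> ('rV[R]_n -> \bar R) -> Prop) : Prop :=
  [/\ (forall f g, E f g -> is_trat f /\ is_trat g),
      (forall f, is_trat f -> E f f),
      (forall f g, E f g -> E g f) /\
      (forall f g h, E f g -> E g h -> E f h),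
      (forall f g h, E f g -> is_trat h ->
          E (fun x => maxe (f x) (h x)) (fun x => maxe (g x) (h x)))
    & (forall f g h, E f g -> is_trat h ->
          E (fun x => (f x + h x)%E) (fun x => (g x + h x)%E))].

Definition tV (R : realType) (n : nat)
    (E : ('rV[R]_n -> \bar R) -> ('rV[R]_n -> \bar R) -> Prop) : set 'rV[R]_n :=
  [set x | forall f g, E f g -> f x = g x].

From HB Require Import structures.
From mathcomp Require Import all_boot all_order all_algebra.
From mathcomp Require Import all_classical all_reals all_analysis.
From mathcomp Require Import ring lra.
Import numFieldNormedType.Exports.
Local Open Scope classical_set_scope.
Import Order.TTheory GRing.Theory Num.Theory.
Local Open Scope ring_scope.

(* A tropical rational function is continuous as a map R^n -> \bar R: a
   tropical polynomial is a maximum of affine functions, and a nonzero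
   denominator never takes the value -oo.  So every congruence variety, an
   intersection of equalizers {f = g}, is closed.  Conversely, a closed set A
   is the variety of the congruence "f and g agree on A": if y is not in A,
   a sup-norm ball of radius r around y misses A, and the tropical polynomials
   x |-> sum_i x_i + max(c, |x - y|_oo) for c = r and c = r/2 agree outside
   that ball but differ at y. *)

Lemma closed_eq_continuous {T U : topologicalType} (f g : T -> U) :
  hausdorff_space U -> continuous f -> continuous g ->
  closed [set x | f x = g x].
Proof.
move=> hU fc gc; rewrite closedE => x /= clx; apply: hU => A B fxA gxB.
apply: contrapT => AB0; apply: clx.
have : \forall y \near x, A (f y) /\ B (g y).
  by apply: filterI; [exact: fc|exact: gc].
apply: filterS => y [Afy Bgy] fgy.
by apply: AB0; exists (f y); split; rewrite // fgy.
Qed.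

Lemma EFin_continuous {R : realType} {T : topologicalType} (F : T -> R) :
  continuous F -> continuous (fun x => (F x)%:E).
Proof. by move=> Fc x; apply: cvg_EFin; [exact: nearW|exact: Fc]. Qed.

Section ereal_sub.
Variable R : realType.
Implicit Types (u v : \bar R) (a b : R).
Local Open Scope ereal_scope.

Lemma maxe_subEFin u v a b :
  maxe (u - a%:E) (v - b%:E) = maxe (u + b%:E) (v + a%:E) - (a + b)%:E.
Proof.
have shift (w : \bar R) (c d : R) : w - c%:E = w + d%:E - (c + d)%:E.
  by case: w => [w| |] //; rewrite -EFinD -!EFinB; congr EFin; ring.
by rewrite (shift u a b) (shift v b a) (addrC b a) -adde_maxl.
Qed.

Lemma adde_subEFin u v a b : (u - a%:E) + (v - b%:E) = (u + v) - (a + b)%:E.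
Proof. by rewrite EFinD oppeD // addeACA. Qed.
End ereal_sub.

Section tropical_rational_functions.
Context {R : realType} {n : nat}.

Definition tmonomial (t : R * 'rV[nat]_n) (x : 'rV[R]_n) : R :=
  t.1 + \sum_(i < n) (t.2 ord0 i)%:R * x ord0 i.

Implicit Types (p q : tpoly R n) (x y : 'rV[R]_n) (j : 'I_n).
Implicit Types (f g : 'rV[R]_n -> \bar R).

Lemma tevalE p x :
  teval p x = \big[maxe/-oo%E]_(t <- p) (tmonomial t x)%:E.
Proof. by []. Qed.

Lemma teval_cons t p x :
  teval (t :: p) x = maxe (tmonomial t x)%:E (teval p x).
Proof. by rewrite /teval big_cons. Qed.

Lemma teval_cat p q x : teval (p ++ q) x = maxe (teval p x) (teval q x).
Proof. by rewrite /teval big_cat. Qed.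

Lemma tmonomial_continuous t : continuous (tmonomial t).
Proof.
have coef_continuous i :
    continuous (fun x : 'rV[R]_n => (t.2 ord0 i)%:R * x ord0 i).
  move=> x.
  apply: (continuousM (s := cst _) (t := fun y : 'rV[R]_n => y ord0 i)).
    exact: cst_continuous.
  exact: coord_continuous.
move=> x; apply: (@continuousD _ R^o _ (cst t.1)); first exact: cst_continuous.
move: x; apply: (continuous_big (op := +%R) (x0 := 0) add_continuous) => i _.
exact: coef_continuous.
Qed.

Lemma teval_continuous (p : tpoly R n) : continuous (teval p).
Proof.
apply: (continuous_big (op := maxe) (x0 := -oo%E) max_continuous) => t _.
exact/EFin_continuous/tmonomial_continuous.
Qed.

Lemma teval_fin_num p x : p != [::] -> teval p x \is a fin_num.
Proof.
case: p => [//|t p] _; rewrite fin_numElt; apply/andP; split.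
  by rewrite teval_cons lt_max ltNyr.
by apply: bigmax_lt => // u _; rewrite ltry.
Qed.

Lemma is_trat_continuous f : is_trat f -> continuous f.
Proof.
move=> [p [q [qn0 fE]]] x; rewrite (funext fE).
apply: (cvgeB (F := nbhs x)); [|exact: teval_continuous..].
by rewrite fin_num_adde_defl // fin_numN teval_fin_num.
Qed.

Lemma closed_tV E : @tcongruence R n E -> closed (tV E).
Proof.
move=> [E_trat _ _ _ _].
have -> : tV E =
    \bigcap_(fg in [set fg | E fg.1 fg.2]) [set x | fg.1 x = fg.2 x].
  apply/seteqP; split=> [x Vx [f g] /= /Vx //|x Vx f g Efg].
  exact: (Vx (f, g)).
apply: closed_bigI => -[f g] /= /E_trat[/is_trat_continuous fc].
move=> /is_trat_continuous gc.
exact: closed_eq_continuous (@ereal_hausdorff R) fc gc.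
Qed.

Definition tpoly_mul p q : tpoly R n :=
  [seq (s.1 + t.1, s.2 + t.2) | s <- p, t <- q].

Lemma tpoly_mul_neq0 p q : p != [::] -> q != [::] -> tpoly_mul p q != [::].
Proof. by case: p => // s p; case: q. Qed.

Lemma tmonomialD s t x :
  tmonomial (s.1 + t.1, s.2 + t.2) x = tmonomial s x + tmonomial t x.
Proof.
rewrite /tmonomial /= addrACA -big_split /=; congr (_ + _).
by apply: eq_bigr => i _; rewrite mxE natrD mulrDl.
Qed.

Lemma teval_mul p q x : teval (tpoly_mul p q) x = teval p x + teval q x.
Proof.
elim: p => [|s p IHp]; first by rewrite /teval big_nil.
rewrite /tpoly_mul allpairs_cons teval_cat IHp teval_cons adde_maxl; congr maxe.
rewrite /teval big_map (big_morph _ (adde_maxr (tmonomial s x)%:E) (addeNy _)).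
by apply: eq_bigr => t _; rewrite -EFinD -tmonomialD.
Qed.

Lemma is_trat_maxe f g :
  is_trat f -> is_trat g -> is_trat (fun x => maxe (f x) (g x)).
Proof.
move=> [p [q [qn0 fE]]] [p' [q' [qn0' gE]]].
exists (tpoly_mul p q' ++ tpoly_mul p' q), (tpoly_mul q q').
split; first exact: tpoly_mul_neq0.
move=> x; rewrite fE gE teval_cat !teval_mul.
rewrite -[teval q x]fineK ?teval_fin_num //.
rewrite -[teval q' x]fineK ?teval_fin_num //.
by rewrite maxe_subEFin EFinD.
Qed.

Lemma is_trat_adde f g : is_trat f -> is_trat g -> is_trat (fun x => f x + g x).
Proof.
move=> [p [q [qn0 fE]]] [p' [q' [qn0' gE]]].
exists (tpoly_mul p p'), (tpoly_mul q q').
split; first exact: tpoly_mul_neq0.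
move=> x; rewrite fE gE !teval_mul.
rewrite -[teval q x]fineK ?teval_fin_num //.
rewrite -[teval q' x]fineK ?teval_fin_num //.
by rewrite adde_subEFin EFinD.
Qed.

Definition coord_sum x : R := \sum_(k < n) x ord0 k.
Definition exp_sum : 'rV[nat]_n := const_mx 1%N.
Definition exp_sum_up j : 'rV[nat]_n := \row_k (if k == j then 2 else 1)%N.
Definition exp_sum_down j : 'rV[nat]_n := \row_k (if k == j then 0 else 1)%N.

Lemma tmonomial_sum c x : tmonomial (c, exp_sum) x = c + coord_sum x.
Proof. by congr (_ + _); apply: eq_bigr => k _; rewrite mxE mul1r. Qed.

Lemma tmonomial_sum_up c j x :
  tmonomial (c, exp_sum_up j) x = c + coord_sum x + x ord0 j.
Proof.
rewrite /tmonomial /coord_sum /= -addrA; congr (_ + _).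
rewrite (bigD1 j) //= [in RHS](bigD1 j) //= mxE eqxx mulr2n mulrDl mul1r addrAC.
by congr (_ + _); apply: eq_bigr => k /negbTE kj; rewrite mxE kj mul1r.
Qed.

Lemma tmonomial_sum_down c j x :
  tmonomial (c, exp_sum_down j) x = c + coord_sum x - x ord0 j.
Proof.
rewrite /tmonomial /coord_sum /= -addrA; congr (_ + _).
rewrite (bigD1 j) //= [in RHS](bigD1 j) //= mxE eqxx mul0r add0r.
rewrite addrAC subrr add0r.
by apply: eq_bigr => k /negbTE kj; rewrite mxE kj mul1r.
Qed.

Definition dist_poly y : tpoly R n :=
  [seq (- y ord0 j, exp_sum_up j) | j <- enum 'I_n] ++
  [seq (y ord0 j, exp_sum_down j) | j <- enum 'I_n].

(* [teval (ball_poly y c) x = coord_sum x + max(c, max_j |x_j - y_j|)]: the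
   sup-norm distance to [y] truncated below at [c]; the factor [coord_sum x]
   (the monomial X_1...X_n) clears the negative exponents of [X_j / y_j]. *)
Definition ball_poly y c : tpoly R n := (c, exp_sum) :: dist_poly y.

Lemma teval_ball_poly_center y c :
  0 <= c -> teval (ball_poly y c) y = (c + coord_sum y)%:E.
Proof.
move=> c0; rewrite teval_cons tmonomial_sum max_l // tevalE big_seq.
apply: bigmax_le => [|t]; first exact: leNye.
rewrite mem_cat lee_fin => /orP[]/mapP[j _ ->].
  by rewrite tmonomial_sum_up; lra.
by rewrite tmonomial_sum_down; lra.
Qed.

Lemma teval_ball_poly_far {y c x j} :
  c <= `|x ord0 j - y ord0 j| ->
  teval (ball_poly y c) x = teval (dist_poly y) x.
Proof.
rewrite ler_normr => cj.
rewrite teval_cons max_r // tmonomial_sum [teval _ x]tevalE.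
have [up|down] := orP cj.
  apply: (bigmax_sup_seq _ (- y ord0 j, exp_sum_up j)) => //.
    by rewrite mem_cat map_f ?mem_enum.
  by rewrite tmonomial_sum_up lee_fin; lra.
apply: (bigmax_sup_seq _ (y ord0 j, exp_sum_down j)) => //.
  by rewrite mem_cat map_f ?mem_enum ?orbT.
by rewrite tmonomial_sum_down lee_fin; lra.
Qed.

Lemma closed_notin_far {A : set 'rV[R]_n} {y} : closed A -> ~ A y ->
  exists2 r : R, 0 < r &
    forall x, A x -> exists j, r <= `|x ord0 j - y ord0 j|.
Proof.
move=> Ac nAy.
have /nbhs_ballP[r r0 rA] : nbhs y (~` A) by exact: (closed_openC Ac).
exists r => // x Ax; apply: contrapT => /forallNP near_y.
apply: (rA x) => //; split=> // i j; rewrite (ord1 i) /ball /= distrC ltNge.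
exact/negP/near_y.
Qed.

Definition agree_on (A : set 'rV[R]_n) f g :=
  [/\ is_trat f, is_trat g & forall x, A x -> f x = g x].

Lemma tcongruence_agree_on A : tcongruence (agree_on A).
Proof.
split.
- by move=> f g [].
- by move=> f ft; split.
- split=> [f g [ft gt fg]|f g h [ft gt fg] [_ ht gh]]; split=> // x Ax.
    by rewrite fg.
  by rewrite fg // gh.
- move=> f g h [ft gt fg] ht.
  by split; [exact: is_trat_maxe|exact: is_trat_maxe|move=> x Ax; rewrite fg].
- move=> f g h [ft gt fg] ht.
  by split; [exact: is_trat_adde|exact: is_trat_adde|move=> x Ax; rewrite fg].
Qed.

Lemma is_trat_teval p : is_trat (teval p).
Proof.
exists p, [:: (0, 0)]; split=> // x.
suff -> : teval [:: (0, 0)] x = 0%E by rewrite sube0.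
rewrite teval_cons tevalE big_nil maxeNy /tmonomial big1 ?addr0 // => i _.
by rewrite mxE mul0r.
Qed.

Lemma tV_agree_on A : closed A -> tV (agree_on A) = A.
Proof.
move=> Ac; apply/seteqP; split=> [y Vy|x Ax f g [_ _ fg]]; last exact: fg.
apply: contrapT => nAy; have [r r0 far] := closed_notin_far Ac nAy.
have r20 : 0 <= r / 2 by rewrite divr_ge0 // ltW.
have /Vy : agree_on A (teval (ball_poly y r)) (teval (ball_poly y (r / 2))).
  split; [exact: is_trat_teval|exact: is_trat_teval|].
  move=> x /far[j rj]; rewrite (teval_ball_poly_far rj).
  by rewrite (teval_ball_poly_far (le_trans _ rj)) //; lra.
rewrite !teval_ball_poly_center ?(ltW r0) // => -[]; lra.
Qed.
End tropical_rational_functions.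

Theorem proposition3p9 (R : realType) (n : nat) (A : set 'rV[R]_n) :
  closed A <-> exists E, tcongruence E /\ A = tV E.
Proof.
split=> [Ac|[E [E_cong ->]]]; last exact: closed_tV.
exists (agree_on A).
by rewrite tV_agree_on //; split=> //; exact: tcongruence_agree_on.
Qed.
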